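(* Let $G$ be $\hbar$-perfect and let $G'$ be obtained from $G$ by copying one vertex $v$, i.e. adding a new vertex $v'$ whose neighbourhood is exactly the neighbourhood of $v$ in $G$ (so $v'$ is not adjacent to $v$). Then $G'$ is $\hbar$-perfect.
   Context: A realization of a graph $G$ on $\{1,\dots,n\}$ is a tuple $(S_1,\dots,S_n)$ of Pauli strings (tensor products of matrices from $\{I,X,Y,Z\}$) of common length with $S_i,S_j$ anticommuting iff $i\sim j$ and commuting otherwise; every graph has one. For $w\in\mathbb{R}^n_{\ge0}$, $\beta(G,w)=\sup_\rho\sum_iw_i\operatorname{tr}(\rho S_i)^2$ over density matrices $\rho$ (independent of the realization), and $\alpha(G,w)=\max\{\sum_{i\in I}w_i: I\text{ independent set of }G\}$. $G$ is $\hbar$-perfect if $\beta(G,w)=\alpha(G,w)$ for all $w\in\mathbb{R}^n_{\ge0}$. *)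

From HB Require Import structures.
From mathcomp Require Import all_boot all_order all_algebra.
From mathcomp Require Import complex mxtens.
From mathcomp Require Import boolp classical_sets reals.

Set Implicit Arguments.
Unset Strict Implicit.
Unset Printing Implicit Defensive.

Import Order.TTheory GRing.Theory Num.Theory.
Local Open Scope ring_scope.

Section HbarPerfect.
Variable R : realType.
Local Notation C := R[i].

(* The four single-qubit Pauli matrices, indexed 0:I, 1:X, 2:Y, 3:Z. *)
Definition pauli (k : 'I_4) : 'M[C]_2 :=
  \matrix_(a < 2, b < 2)
    match val k with
    | 0 => if val a == val b then 1 else 0
    | 1 => if val a == val b then 0 else 1
    | 2 => if val a == val b then 0
           else if val a == 0%N then - 'i%C else 'i%C
    | _ => if val a == val b then (if val a == 0%N then 1 else -1)
           else 0
    end.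

Fixpoint pauli_string (m : nat) : ('I_m -> 'I_4) -> 'M[C]_(2 ^ m) :=
  match m return ('I_m -> 'I_4) -> 'M[C]_(2 ^ m) with
  | 0 => fun _ => 1%:M
  | m'.+1 => fun s =>
      castmx (esym (expnS 2 m'), esym (expnS 2 m'))
        (pauli (s ord0) *t pauli_string (fun i : 'I_m' => s (lift ord0 i)))
  end.

Definition realization (n : nat) (e : rel 'I_n) (m : nat)
    (S : 'I_n -> 'I_m -> 'I_4) : Prop :=
  forall i j : 'I_n,
    let A := pauli_string (S i) in
    let B := pauli_string (S j) in
    (e i j -> A *m B = - (B *m A)) /\ (~~ e i j -> A *m B = B *m A).

Definition adjmx (p q : nat) (A : 'M[C]_(p, q)) : 'M[C]_(q, p) :=
  (map_mx (@conjc R) A)^T.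

Definition density (N : nat) (rho : 'M[C]_N) : Prop :=
  [/\ adjmx rho = rho,
      (forall x : 'cV[C]_N, 0 <= ((adjmx x) *m rho *m x) 0 0)
    & \tr rho = 1].

(* beta(G, w) = sup_rho sum_i w_i tr(rho S_i)^2, computed from the
   realization S.  tr(rho S_i) is real for Hermitian rho, S_i; we take
   its real part to land in R. *)
Definition beta (n m : nat) (S : 'I_n -> 'I_m -> 'I_4) (w : 'I_n -> R) : R :=
  sup [set t : R | exists rho : 'M[C]_(2 ^ m), density rho /\
        t = \sum_(i < n) w i * (@complex.Re R (\tr (rho *m pauli_string (S i)))) ^+ 2].

Definition independent (n : nat) (e : rel 'I_n) (I : {set 'I_n}) : bool :=
  [forall i in I, forall j in I, ~~ e i j].

Definition alpha (n : nat) (e : rel 'I_n) (w : 'I_n -> R) : R :=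
  \big[Num.max/0]_(I : {set 'I_n} | independent e I) \sum_(i in I) w i.

(* hbar-perfect: beta(G,w) = alpha(G,w) for every nonnegative weight w.
   Since beta does not depend on the realization (and realizations exist),
   we require it for every realization. *)
Definition hperfect (n : nat) (e : rel 'I_n) : Prop :=
  forall (m : nat) (S : 'I_n -> 'I_m -> 'I_4), realization e S ->
  forall w : 'I_n -> R, (forall i, 0 <= w i) -> beta S w = alpha e w.

End HbarPerfect.

(* The graph G' on 'I_n.+1 obtained from G on 'I_n by adding a copy
   v' := ord_max of the vertex v: vertex ord_max is mapped to v, and
   i ~' j iff (image of i) ~ (image of j).  For irreflexive e, v' and v
   are non-adjacent and N_{G'}(v') = N_G(v). *)
Definition copy_proj (n : nat) (v : 'I_n) (i : 'I_n.+1) : 'I_n :=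
  odflt v (unlift ord_max i).

Definition copy_vertex (n : nat) (e : rel 'I_n) (v : 'I_n) : rel 'I_n.+1 :=
  fun i j => e (copy_proj v i) (copy_proj v j).

From HB Require Import structures.
From mathcomp Require Import all_boot all_order all_algebra.
From mathcomp Require Import complex mxtens.
From mathcomp Require Import boolp classical_sets reals.
From mathcomp Require Import lra.

Set Implicit Arguments.
Unset Strict Implicit.
Unset Printing Implicit Defensive.

Import Order.TTheory GRing.Theory Num.Theory.
Local Open Scope ring_scope.

(* For every realization, [alpha <= beta]: the Pauli strings of an independent set are
   commuting Hermitian involutions, so they have a common eigenvector, with eigenvalues
   [+-1], whose pure state makes every [tr(rho S_i)^2] equal to 1.  Conversely, let [S']
   realize [G'] and [rho] be a state, and put [r_u = tr(rho S'_u)^2 <= 1].  Dropping [v']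
   from [S'], or dropping [v] and letting [S'_v'] take its place, gives two realizations
   of [G]; weight [v] by [w_v + w_v'].  The one keeping the copy with the larger [r] has
   value at least the value of [rho] for [G'], and by hypothesis its [beta] is
   [alpha(G, w_v + w_v') <= alpha(G', w)], since preimages of independent sets of [G] are
   independent in [G']. *)

Section MatrixFacts.
Variable K : pzRingType.

Lemma castmx_mulmx p q (E : p = q) (A B : 'M[K]_p) :
  castmx (E, E) A *m castmx (E, E) B = castmx (E, E) (A *m B).
Proof. by case: q / E. Qed.

Lemma castmx1 p q (E : p = q) : castmx (E, E) (1 : 'M[K]_p) = 1.
Proof. by case: q / E. Qed.

Lemma tensmx11 p q : (1 : 'M[K]_p) *t (1 : 'M[K]_q) = 1.
Proof.
apply/matrixP => i j.
case: (mxtens_indexP i) => i1 i2; case: (mxtens_indexP j) => j1 j2.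
rewrite tensmxE !mxE (inj_eq (can_inj (@mxtens_indexK _ _))) xpair_eqE.
by case: (i1 == j1); case: (i2 == j2); rewrite ?mulr1 ?mulr0 ?mul0r.
Qed.

End MatrixFacts.

Lemma const_mx1_neq0 (K : nzRingType) N : (0 < N)%N -> const_mx 1 != 0 :> 'cV[K]_N.
Proof.
by move=> N_gt0; apply/eqP => /matrixP/(_ (Ordinal N_gt0) 0)/eqP; rewrite !mxE oner_eq0.
Qed.

Section Adjoint.
Variable R : realType.
Local Notation C := R[i].

Lemma adjmxE p q (M : 'M[C]_(p, q)) i j : adjmx M i j = (M j i)^*%C.
Proof. by rewrite !mxE. Qed.

Lemma adjmxK p q (M : 'M[C]_(p, q)) : adjmx (adjmx M) = M.
Proof. by apply/matrixP => i j; rewrite !adjmxE conjcK. Qed.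

Lemma adjmxM p q r (M : 'M[C]_(p, q)) (N : 'M[C]_(q, r)) :
  adjmx (M *m N) = adjmx N *m adjmx M.
Proof. by rewrite /adjmx map_mxM trmx_mul. Qed.

Lemma adjmxD p q (M N : 'M[C]_(p, q)) : adjmx (M + N) = adjmx M + adjmx N.
Proof. by apply/matrixP => i j; rewrite !mxE rmorphD. Qed.

Lemma adjmxN p q (M : 'M[C]_(p, q)) : adjmx (- M) = - adjmx M.
Proof. by apply/matrixP => i j; rewrite !mxE rmorphN. Qed.

Lemma adjmxZ p q c (M : 'M[C]_(p, q)) : adjmx (c *: M) = c^*%C *: adjmx M.
Proof. by apply/matrixP => i j; rewrite !mxE rmorphM. Qed.

Lemma adjmx1 p : adjmx (1 : 'M[C]_p) = 1.
Proof. by apply/matrixP => i j; rewrite !mxE eq_sym (@conjc_nat R (i == j)). Qed.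

Lemma adjmx_tens p q r t (M : 'M[C]_(p, q)) (N : 'M[C]_(r, t)) :
  adjmx (M *t N) = adjmx M *t adjmx N.
Proof. by rewrite /adjmx map_mxT trmx_tens. Qed.

Lemma adjmx_castmx p q (E : p = q) (M : 'M[C]_p) :
  adjmx (castmx (E, E) M) = castmx (E, E) (adjmx M).
Proof. by case: q / E. Qed.

End Adjoint.

Section PauliStrings.
Variable R : realType.

Lemma pauli_invol (k : 'I_4) : pauli R k *m pauli R k = 1.
Proof.
apply/matrixP => a b; rewrite !mxE !big_ord_recr big_ord0 /= !mxE.
case: k => [[|[|[|[|k]]]] Hk] //=;
  case: a => [[|[|a]] Ha] //=; case: b => [[|[|b]] Hb] //=.
all: rewrite ?mul0r ?mulr0 ?mul1r ?mulr1 ?addr0 ?add0r ?mulrNN ?mulN1r //.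
all: by rewrite ?mulrN ?mulNr -?expr2 ?sqr_i ?opprK ?expr1n.
Qed.

Lemma adjmx_pauli (k : 'I_4) : adjmx (pauli R k) = pauli R k.
Proof.
apply/matrixP => a b; rewrite !mxE.
case: k => [[|[|[|[|k]]]] Hk] //=;
  case: a => [[|[|a]] Ha] //=; case: b => [[|[|b]] Hb] //=.
all: by apply/eqP; rewrite eq_complex /= ?oppr0 ?opprK !eqxx.
Qed.

Lemma pauli_string_invol m (s : 'I_m -> 'I_4) :
  pauli_string R s *m pauli_string R s = 1.
Proof.
elim: m s => [|m IHm] s /=; first exact: mul1mx.
by rewrite castmx_mulmx tensmx_mul pauli_invol IHm tensmx11 castmx1.
Qed.

Lemma adjmx_pauli_string m (s : 'I_m -> 'I_4) :
  adjmx (pauli_string R s) = pauli_string R s.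
Proof.
elim: m s => [|m IHm] s /=; first exact: adjmx1.
by rewrite adjmx_castmx adjmx_tens adjmx_pauli IHm.
Qed.

End PauliStrings.

Section States.
Variable R : realType.
Local Notation C := R[i].

Lemma psd_mxtrace_gram_ge0 N (rho B : 'M[C]_N) :
  (forall x : 'cV[C]_N, 0 <= (adjmx x *m rho *m x) 0 0) ->
  0 <= \tr (rho *m (adjmx B *m B)).
Proof.
move=> rho_psd; rewrite mulmxA mxtrace_mulC /mxtrace; apply: sumr_ge0 => j _.
suff <- : (adjmx (col j (adjmx B)) *m rho *m col j (adjmx B)) 0 0
        = (B *m (rho *m adjmx B)) j j by [].
rewrite mulmxA !mxE; apply: eq_bigr => k _; rewrite !mxE; congr (_ * _).
by apply: eq_bigr => l _; rewrite !mxE conjcK.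
Qed.

Lemma density_reflection_ge0 N (rho B : 'M[C]_N) :
  density rho -> B *m B = 1 -> adjmx B = B -> 0 <= 1 + \tr (rho *m B).
Proof.
case=> _ rho_psd tr_rho BB B_herm.
(* [P = (1 + B) / 2] is an orthogonal projection, so [P = P^* P] is a Gram matrix. *)
pose P := (2^-1 : C) *: (1 + B).
have P_herm : adjmx P = P by rewrite adjmxZ adjmxD adjmx1 B_herm conjc_inv conjc_nat.
have P_gram : adjmx P *m P = P.
  rewrite P_herm -scalemxAl -scalemxAr scalerA mulmxDl !mulmxDr BB mul1mx mulmx1.
  rewrite mul1mx (addrC B 1) -mulr2n -[(1 + B) *+ 2]scaler_nat scalerA.
  by rewrite divfK ?pnatr_eq0.
have := psd_mxtrace_gram_ge0 P rho_psd.
rewrite P_gram -scalemxAr mxtraceZ mulmxDr mulmx1 mxtraceD tr_rho.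
by rewrite pmulr_rge0 // invr_gt0 ltr0n.
Qed.

Lemma density_expectation_sqr_le1 N (rho A : 'M[C]_N) :
  density rho -> A *m A = 1 -> adjmx A = A ->
  complex.Re (\tr (rho *m A)) ^+ 2 <= 1.
Proof.
move=> rho_density AA A_herm.
have := density_reflection_ge0 rho_density AA A_herm.
have := density_reflection_ge0 (B := - A) rho_density.
rewrite mulNmx mulmxN opprK AA adjmxN A_herm mulmxN linearN => /(_ erefl erefl).
have ReD (z : C) : complex.Re (1 + z) = 1 + complex.Re z by case: z.
have ReN (z : C) : complex.Re (- z) = - complex.Re z by case: z.
by rewrite !lecE !ReD ReN => /andP [_ ?] /andP [_ ?]; nra.
Qed.

Lemma involution_split_eigen N p (A : 'M[C]_N) (s : C) (Q : 'M[C]_(N, p)) :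
  A *m A = 1 -> s ^+ 2 = 1 ->
  A *m ((1 + s *: A) *m Q) = s *: ((1 + s *: A) *m Q).
Proof.
move=> AA s2; rewrite mulmxA scalemxAl; congr (_ *m Q).
by rewrite mulmxDr mulmx1 -scalemxAr AA scalerDr scalerA -expr2 s2 scale1r addrC.
Qed.

Lemma involution_eigen_nonzero N p (A : 'M[C]_N) (Q : 'M[C]_(N, p)) :
  Q != 0 -> exists2 s : C, (s == 1) || (s == -1) & (1 + s *: A) *m Q != 0.
Proof.
move=> Q_neq0.
have [Pp0|Pp_neq0] := eqVneq ((1 + 1 *: A) *m Q) 0; last by exists 1; rewrite ?eqxx.
exists (-1); rewrite ?eqxx ?orbT //; apply: contraNneq Q_neq0 => Pm0.
have : (1 + 1 *: A) *m Q + (1 + (-1) *: A) *m Q = 2%:R *: Q.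
  by rewrite -mulmxDl scale1r scaleN1r addrACA subrr addr0 mulmxDl mul1mx scaler_nat.
by rewrite Pp0 Pm0 addr0 => /esym/eqP; rewrite scaler_eq0 pnatr_eq0.
Qed.

Lemma commuting_involutions_common_eigenvector N (l : seq 'M[C]_N) :
  (0 < N)%N -> {in l, forall A, A *m A = 1} ->
  {in l &, forall A B, A *m B = B *m A} ->
  exists2 x : 'cV[C]_N, x != 0 &
    {in l, forall A, exists2 s : C, (s == 1) || (s == -1) & A *m x = s *: x}.
Proof.
move=> N_gt0; elim: l => [|A l IHl] l_invol l_comm.
  by exists (const_mx 1) => //; exact: const_mx1_neq0.
have sub_l : {subset l <= A :: l} by move=> B lB; rewrite in_cons lB orbT.
have [x x_neq0 x_eigen] := IHl (sub_in1 sub_l l_invol) (sub_in2 sub_l l_comm).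
have [s s_sign y_neq0] := involution_eigen_nonzero A x_neq0.
exists ((1 + s *: A) *m x) => // B; rewrite in_cons => /predU1P [-> | lB].
  exists s => //; apply: involution_split_eigen; first by rewrite l_invol ?mem_head.
  by case/orP: s_sign => /eqP ->; rewrite ?sqrrN expr1n.
have [t t_sign Bx] := x_eigen B lB; exists t => //.
have AB : A *m B = B *m A by rewrite l_comm ?mem_head ?sub_l.
rewrite !mulmxA (_ : B *m _ = (1 + s *: A) *m B) -?mulmxA ?Bx ?scalemxAr //.
by rewrite mulmxDr mulmxDl mulmx1 mul1mx -scalemxAr -scalemxAl AB.
Qed.

Lemma cnorm2_gt0 N (x : 'cV[C]_N) : x != 0 -> 0 < (adjmx x *m x) 0 0.
Proof.
move=> x_neq0; have term_ge0 k : 0 <= adjmx x 0 k * x k 0.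
  by rewrite adjmxE mulrC mulcJ_ge0.
rewrite mxE lt0r sumr_ge0 ?andbT //; apply: contra x_neq0 => /eqP.
move/(psumr_eq0P (fun k _ => term_ge0 k)) => x0.
apply/eqP/matrixP => k j; rewrite [j]ord1 mxE.
by have /eqP := x0 k isT; rewrite adjmxE mulf_eq0 conjc_eq0 orbb => /eqP.
Qed.

Lemma pure_state N (x : 'cV[C]_N) : x != 0 ->
  exists2 rho : 'M[C]_N, density rho &
    forall A s, A *m x = s *: x -> \tr (rho *m A) = s.
Proof.
move=> /cnorm2_gt0; set nx := (adjmx x *m x) 0 0 => nx_gt0.
have nx_neq0 : nx != 0 by rewrite gt_eqF.
have nxJ : nx^*%C = nx by rewrite /nx -adjmxE adjmxM adjmxK.
exists (nx^-1 *: (x *m adjmx x)); last first.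
  move=> A s Ax; rewrite -scalemxAl mxtraceZ mxtrace_mulC mulmxA Ax -scalemxAl.
  by rewrite mxtraceZ mxtrace_mulC /mxtrace big_ord1 -/nx mulrCA mulVf // mulr1.
split.
- by rewrite adjmxZ adjmxM adjmxK conjc_inv nxJ.
- move=> y; rewrite -scalemxAr -scalemxAl mxE mulmxA -[_ *m x *m _ *m y]mulmxA.
  set c := (adjmx y *m x) 0 0.
  have -> : (adjmx y *m x *m (adjmx x *m y)) 0 0 = c * c^*%C.
    rewrite -adjmxE adjmxM adjmxK !mxE big_ord1.
    by congr (_ * _); rewrite mxE; apply: eq_bigr => k _; rewrite !mxE.
  by rewrite mulr_ge0 ?mulcJ_ge0 // invr_ge0 ltW.
- by rewrite mxtraceZ mxtrace_mulC /mxtrace big_ord1 -/nx mulVf.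
Qed.

End States.

Section BetaAlpha.
Variable R : realType.
Local Notation C := R[i].

Definition sq_expectation m (s : 'I_m -> 'I_4) (rho : 'M[C]_(2 ^ m)) : R :=
  complex.Re (\tr (rho *m pauli_string R s)) ^+ 2.

Definition beta_value n m (S : 'I_n -> 'I_m -> 'I_4) (w : 'I_n -> R)
    (rho : 'M[C]_(2 ^ m)) : R :=
  \sum_(i < n) w i * sq_expectation (S i) rho.

Lemma sq_expectation_le1 m (s : 'I_m -> 'I_4) rho :
  density rho -> sq_expectation s rho <= 1.
Proof.
move=> rho_density.
exact: density_expectation_sqr_le1 (pauli_string_invol _ _) (adjmx_pauli_string _ _).
Qed.

Section Weights.
Variables (n m : nat) (S : 'I_n -> 'I_m -> 'I_4) (w : 'I_n -> R).
Hypothesis w_ge0 : forall i, 0 <= w i.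

Lemma beta_value_ge0 rho : 0 <= beta_value S w rho.
Proof. by apply: sumr_ge0 => i _; rewrite mulr_ge0 ?sqr_ge0. Qed.

Lemma beta_value_le_beta rho : density rho -> beta_value S w rho <= beta S w.
Proof.
move=> rho_density; apply: ub_le_sup; last by exists rho.
exists (\sum_i w i) => _ [rho' [rho'_density ->]].
apply: ler_sum => i _; rewrite ler_piMr //; exact: sq_expectation_le1.
Qed.

End Weights.

Lemma density_exists m : exists rho : 'M[C]_(2 ^ m), density rho.
Proof. by have [rho ? _] := pure_state (const_mx1_neq0 C (expn_gt0 2 m)); exists rho. Qed.

Lemma ge_beta n m (S : 'I_n -> 'I_m -> 'I_4) (w : 'I_n -> R) x :
  (forall rho, density rho -> beta_value S w rho <= x) -> beta S w <= x.
Proof.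
move=> le_x; have [rho rho_density] := density_exists m.
apply: ge_sup; first by exists (beta_value S w rho), rho.
by move=> _ [rho' [rho'_density ->]]; exact: le_x.
Qed.

Lemma independentP n (e : rel 'I_n) (I : {set 'I_n}) :
  reflect {in I &, forall i j, ~~ e i j} (independent e I).
Proof.
apply: (iffP forall_inP) => [indep i j Ii Ij | indep i Ii].
  exact: (forall_inP (indep i Ii)).
by apply/forall_inP => j; exact: indep.
Qed.

Lemma independent_sum_le_beta_value n (e : rel 'I_n) m
    (S : 'I_n -> 'I_m -> 'I_4) (w : 'I_n -> R) (I : {set 'I_n}) :
  realization R e S -> (forall i, 0 <= w i) -> independent e I ->
  exists2 rho, density rho & \sum_(i in I) w i <= beta_value S w rho.
Proof.
move=> S_real w_ge0 /independentP I_indep.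
pose l := [seq pauli_string R (S i) | i <- enum I].
have l_invol : {in l, forall A, A *m A = 1}.
  by move=> _ /mapP [i _ ->]; exact: pauli_string_invol.
have l_comm : {in l &, forall A B, A *m B = B *m A}.
  move=> _ _ /mapP [i Ii ->] /mapP [j Ij ->]; apply: (S_real i j).2.
  by apply: I_indep; rewrite -mem_enum.
have [x x_neq0 x_eigen] :=
  commuting_involutions_common_eigenvector (expn_gt0 2 m) l_invol l_comm.
have [rho rho_density rho_tr] := pure_state x_neq0.
exists rho => //; rewrite /beta_value [leRHS](bigID (mem I)) /= -[leLHS]addr0.
apply: lerD; last by apply: sumr_ge0 => i _; rewrite mulr_ge0 ?sqr_ge0.
apply: ler_sum => i Ii.
have Si_l : pauli_string R (S i) \in l by apply: map_f; rewrite mem_enum.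
have [s s_sign Sx] := x_eigen _ Si_l.
rewrite /sq_expectation (rho_tr _ _ Sx).
by case/orP: s_sign => /eqP -> /=; rewrite ?sqrrN expr1n mulr1.
Qed.

Lemma alpha_le_beta n (e : rel 'I_n) m (S : 'I_n -> 'I_m -> 'I_4) (w : 'I_n -> R) :
  realization R e S -> (forall i, 0 <= w i) -> alpha e w <= beta S w.
Proof.
move=> S_real w_ge0; apply: bigmax_le => [|I I_indep].
  have [rho rho_density] := density_exists m.
  exact: le_trans (beta_value_ge0 S w_ge0 rho) (beta_value_le_beta S w_ge0 rho_density).
have [rho rho_density le_I] := independent_sum_le_beta_value S_real w_ge0 I_indep.
exact: le_trans le_I (beta_value_le_beta S w_ge0 rho_density).
Qed.

Definition fiber_weight k n (f : 'I_k -> 'I_n) (w : 'I_k -> R) (i : 'I_n) : R :=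
  \sum_(j | f j == i) w j.

Lemma alpha_fiber_weight_le k n (e : rel 'I_n) (f : 'I_k -> 'I_n) (w : 'I_k -> R) :
  alpha e (fiber_weight f w) <= alpha (fun j1 j2 => e (f j1) (f j2)) w.
Proof.
apply: bigmax_le => [|I /independentP I_indep]; first exact: bigmax_ge_id.
have preI_indep : independent (fun j1 j2 => e (f j1) (f j2)) (f @^-1: I).
  by apply/independentP => j1 j2; rewrite !inE; exact: I_indep.
suff -> : \sum_(i in I) fiber_weight f w i = \sum_(j in f @^-1: I) w j.
  exact: le_bigmax_cond preI_indep.
rewrite [RHS](partition_big f (fun i => i \in I)) => [|j]; last by rewrite inE.
apply: eq_bigr => i Ii; apply: eq_bigl => j.
by rewrite inE; case: eqP => [->|]; rewrite ?Ii ?andbF.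
Qed.

End BetaAlpha.

Section CopyVertex.
Variables (R : realType) (n : nat) (e : rel 'I_n) (v : 'I_n).
Local Notation old := (widen_ord (leqnSn n)).

Definition reroute_copy (i : 'I_n) : 'I_n.+1 := if i == v then ord_max else old i.

Lemma copy_proj_old : cancel old (copy_proj v).
Proof.
move=> i; rewrite /copy_proj (_ : old i = lift ord_max i) ?liftK //.
exact/val_inj/esym/lift_max.
Qed.

Lemma copy_proj_reroute : cancel reroute_copy (copy_proj v).
Proof.
move=> i; rewrite /reroute_copy; case: eqP => [->|_]; last exact: copy_proj_old.
by rewrite /copy_proj unlift_none.
Qed.

Lemma realization_copy_vertex m (S' : 'I_n.+1 -> 'I_m -> 'I_4) (g : 'I_n -> 'I_n.+1) :
  realization R (copy_vertex e v) S' -> cancel g (copy_proj v) ->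
  realization R e (fun i => S' (g i)).
Proof. by move=> S'_real gK i j; have := S'_real (g i) (g j); rewrite /copy_vertex !gK. Qed.

Lemma fiber_weight_copy_proj (w : 'I_n.+1 -> R) i :
  fiber_weight (copy_proj v) w i = w (old i) + (if i == v then w ord_max else 0).
Proof.
rewrite /fiber_weight big_mkcond big_ord_recr /= /copy_proj unlift_none /= eq_sym.
by under eq_bigr do rewrite -/(copy_proj v _) copy_proj_old; rewrite -big_mkcond big_pred1_eq.
Qed.

Section Values.
Variables (m : nat) (S' : 'I_n.+1 -> 'I_m -> 'I_4) (w : 'I_n.+1 -> R).
Variable rho : 'M[R[i]]_(2 ^ m).
Local Notation r j := (sq_expectation (S' j) rho).
Local Notation rest := (\sum_(i | i != v) w (old i) * r (old i)).

Lemma beta_value_copy_vertex :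
  beta_value S' w rho = w (old v) * r (old v) + rest + w ord_max * r ord_max.
Proof. by rewrite /beta_value big_ord_recr /= (bigD1 v). Qed.

Lemma beta_value_section (g : 'I_n -> 'I_n.+1) : {in [pred i | i != v], g =1 old} ->
  beta_value (fun i => S' (g i)) (fiber_weight (copy_proj v) w) rho
  = (w (old v) + w ord_max) * r (g v) + rest.
Proof.
move=> g_old; rewrite /beta_value (bigD1 v) //= fiber_weight_copy_proj eqxx.
congr (_ + _); apply: eq_bigr => i i_neq_v.
by rewrite fiber_weight_copy_proj (negbTE i_neq_v) addr0 g_old.
Qed.

(* Of the two copies of [v], keep the one with the larger squared expectation. *)
Lemma beta_value_copy_vertex_le : (forall j, 0 <= w j) ->
  beta_value S' w rho <=
  Num.max (beta_value (fun i => S' (old i)) (fiber_weight (copy_proj v) w) rho)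
          (beta_value (fun i => S' (reroute_copy i)) (fiber_weight (copy_proj v) w) rho).
Proof.
move=> w_ge0.
have reroute_old : {in [pred i | i != v], reroute_copy =1 old}.
  by move=> i; rewrite inE /reroute_copy => /negbTE ->.
rewrite beta_value_copy_vertex (beta_value_section (g := old)) //.
rewrite (beta_value_section reroute_old) /reroute_copy eqxx le_max.
have := w_ge0 (old v); have := w_ge0 ord_max.
by case: (leP (r (old v)) (r ord_max)) => ? ? ?; apply/orP; [right|left]; nra.
Qed.

End Values.

End CopyVertex.

Theorem mainTheorem7 (R : realType) (n : nat) (e : rel 'I_n) (v : 'I_n) :
  symmetric e -> irreflexive e ->
  hperfect R e -> hperfect R (copy_vertex e v).
Proof.
(* The argument works for an arbitrary relation [e]. *)
move=> _ _ G_perfect m S' S'_real w w_ge0.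
have fw_ge0 i : 0 <= fiber_weight (copy_proj v) w i by apply: sumr_ge0.
have beta_section g : cancel g (copy_proj v) ->
    beta (fun i => S' (g i)) (fiber_weight (copy_proj v) w) <= alpha (copy_vertex e v) w.
  move=> gK; rewrite (G_perfect _ _ (realization_copy_vertex S'_real gK)) //.
  exact: alpha_fiber_weight_le.
apply/eqP; rewrite eq_le alpha_le_beta // andbT.
apply: ge_beta => rho rho_density.
apply: le_trans (beta_value_copy_vertex_le v S' rho w_ge0) _.
rewrite ge_max; apply/andP; split.
- apply: le_trans (beta_section _ (copy_proj_old v)).
  exact: beta_value_le_beta.
- apply: le_trans (beta_section _ (copy_proj_reroute v)).
  exact: beta_value_le_beta.
Qed.
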